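(* There is an absolute constant $C_1$ such that for all $p\in(0,0.1)$, with $q=-\log(1-p)$, $A=\lceil 1/\sqrt q\rceil$, $B=\lfloor q^{-1}\log q^{-1}\rfloor$, $$\int_{Aq}^{Bq} g(z)\,dz\ge \frac{\pi^2}{18}-C_1\sqrt q\,\log q^{-1}.$$
   Context: $\beta(u)=\frac{u+\sqrt{u(4-3u)}}{2}$ and $g(z)=-\log\beta(1-e^{-z})$ for $z>0$. *)

From Stdlib Require Import Reals.
From Coquelicot Require Import Coquelicot.
Open Scope R_scope.

Definition beta (u : R) : R := (u + sqrt (u * (4 - 3 * u))) / 2.

Definition g (z : R) : R := - ln (beta (1 - exp (- z))).

(* floor and ceiling as integers: Int_part r = up r - 1 is the floor *)
Definition floorZ (x : R) : Z := Int_part x.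
Definition ceilZ (x : R) : Z := (- Int_part (- x))%Z.

From Stdlib Require Import Reals Lra Lia.
From Coquelicot Require Import Coquelicot.
Open Scope R_scope.

(* The substitution z = theta u, theta u = ln ((1 + u + u^2) / (1 + u)), linearises g:
   g (theta u) = theta u - ln u.  Integrating by parts and folding [1, b] onto [1/b, 1]
   by u -> 1/u (theta u = ln u + theta (1/u)) expresses the integral of g over
   [theta a, theta b] through a nonnegative boundary term, a term of size a^2 |ln a|,
   and K a + K (1/b), where K e is the integral of theta v / v over [e, 1].  Expanding
   theta v = sum_n (v^(2n) - v^(3n)) / n gives K e >= zeta(2)/6 - O(e^2), and
   zeta(2) = pi^2/6 follows from the Wallis-type integrals of cos^(2n) x and
   x^2 cos^(2n) x over [0, pi/2].  For a of order sqrt (A q) and b = e^(B q - 1),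
   [theta a, theta b] lies inside [A q, B q], where g >= 0. *)

(* auto_derive unfolds [INR (S k)] into a match on [k]; fold it back. *)
Ltac fold_INR_S :=
  repeat match goal with
  | |- context [match ?k with O => 1 | S _ => INR ?k + 1 end] =>
      change (match k with O => 1 | S _ => INR k + 1 end) with (INR (S k))
  end.

(* Coquelicot states integral and derivative equalities in the carrier of a normed
   module; ring and field only see them at type R. *)
Ltac as_R_eq := match goal with |- ?x = ?y => change (@eq R x y) end.

Lemma continuous_of_ex_derive (f : R -> R) x : ex_derive f x -> continuous f x.
Proof. apply (@ex_derive_continuous R_AbsRing R_NormedModule). Qed.

Lemma ex_RInt_of_continuous (f : R -> R) a b : a <= b ->
  (forall x, a <= x <= b -> continuous f x) -> ex_RInt f a b.
Proof.
  intros Hab Hf. apply (@ex_RInt_continuous R_CompleteNormedModule).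
  intros x Hx. rewrite Rmin_left, Rmax_right in Hx by lra. auto.
Qed.

Lemma RInt_of_is_derive (F f : R -> R) a b : a <= b ->
  (forall x, a <= x <= b -> is_derive F x (f x)) ->
  (forall x, a <= x <= b -> continuous f x) ->
  RInt f a b = F b - F a.
Proof.
  intros Hab HF Hf. apply is_RInt_unique, (is_RInt_derive F f);
    intros x Hx; rewrite Rmin_left, Rmax_right in Hx by lra; auto.
Qed.

Lemma le_of_is_derive_ge0 (F f : R -> R) a b : a <= b ->
  (forall x, a <= x <= b -> is_derive F x (f x)) ->
  (forall x, a <= x <= b -> continuous f x) ->
  (forall x, a < x < b -> 0 <= f x) -> F a <= F b.
Proof.
  intros Hab HF Hf Hpos.
  assert (HI : 0 <= RInt f a b) by (apply RInt_ge_0; auto; apply ex_RInt_of_continuous; auto).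
  rewrite (RInt_of_is_derive F f) in HI; auto; lra.
Qed.

Lemma is_RInt_lincomb (f h : R -> R) a b (c d If Ih : R) :
  is_RInt f a b If -> is_RInt h a b Ih ->
  is_RInt (fun x => c * f x + d * h x) a b (c * If + d * Ih).
Proof.
  intros Hf Hh.
  exact (is_RInt_plus _ _ _ _ _ _ (is_RInt_scal _ _ _ c _ Hf) (is_RInt_scal _ _ _ d _ Hh)).
Qed.

Lemma ex_RInt_lincomb (f h : R -> R) a b (c d : R) : ex_RInt f a b -> ex_RInt h a b ->
  ex_RInt (fun x => c * f x + d * h x) a b.
Proof.
  intros Hf Hh. eexists.
  apply is_RInt_lincomb; apply (RInt_correct (V := R_CompleteNormedModule)); auto.
Qed.

Lemma RInt_lincomb (f h : R -> R) a b (c d : R) : ex_RInt f a b -> ex_RInt h a b ->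
  RInt (fun x => c * f x + d * h x) a b = c * RInt f a b + d * RInt h a b.
Proof.
  intros Hf Hh. apply is_RInt_unique, is_RInt_lincomb;
    apply (RInt_correct (V := R_CompleteNormedModule)); auto.
Qed.

Lemma RInt_le_subinterval (f : R -> R) z1 s t z2 :
  z1 <= s -> s <= t -> t <= z2 ->
  (forall x, z1 <= x <= z2 -> continuous f x /\ 0 <= f x) ->
  RInt f s t <= RInt f z1 z2.
Proof.
  intros H1 H2 H3 Hf.
  assert (ex : forall u v, z1 <= u <= v -> v <= z2 -> ex_RInt f u v).
  { intros u v Hu Hv. apply ex_RInt_of_continuous; [lra|]. intros; apply Hf; lra. }
  assert (pos : forall u v, z1 <= u <= v -> v <= z2 -> 0 <= RInt f u v).
  { intros u v Hu Hv. apply RInt_ge_0; [lra | apply ex; lra | intros; apply Hf; lra]. }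
  rewrite <- (RInt_Chasles f z1 s z2), <- (RInt_Chasles f s t z2) by (apply ex; lra).
  pose proof (pos z1 s). pose proof (pos t z2). unfold plus; simpl. lra.
Qed.

Lemma sin_sq x : sin x ^ 2 = 1 - cos x ^ 2.
Proof. rewrite <- !Rsqr_pow2. apply sin2. Qed.

Lemma is_derive_sin_cos_pow k x :
  is_derive (fun x => sin x * cos x ^ S k) x
    ((INR k + 2) * cos x ^ S (S k) - (INR k + 1) * cos x ^ k).
Proof.
  replace ((INR k + 2) * cos x ^ S (S k) - (INR k + 1) * cos x ^ k)
    with (cos x ^ S (S k) - (INR k + 1) * sin x ^ 2 * cos x ^ k)
    by (rewrite sin_sq; simpl; field).
  auto_derive; [exact I|]. fold_INR_S. rewrite !S_INR. as_R_eq. simpl. field.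
Qed.

Lemma is_derive_wallis_J k x :
  is_derive (fun x => x * cos x ^ S (S k) + (INR k + 2) / 2 * x ^ 2 * sin x * cos x ^ S k) x
    (cos x ^ S (S k) + (INR k + 2) ^ 2 / 2 * (x ^ 2 * cos x ^ S (S k))
     - (INR k + 2) * (INR k + 1) / 2 * (x ^ 2 * cos x ^ k)).
Proof.
  replace (cos x ^ S (S k) + (INR k + 2) ^ 2 / 2 * (x ^ 2 * cos x ^ S (S k))
     - (INR k + 2) * (INR k + 1) / 2 * (x ^ 2 * cos x ^ k))
    with (cos x ^ S (S k) + (INR k + 2) / 2 * (x ^ 2 * cos x ^ S (S k))
     - (INR k + 2) * (INR k + 1) / 2 * (x ^ 2 * sin x ^ 2 * cos x ^ k))
    by (rewrite sin_sq; simpl; field).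
  auto_derive; [exact I|]. fold_INR_S. rewrite !S_INR. as_R_eq. simpl. field.
Qed.

Definition wallis_I (n : nat) : R := RInt (fun x => cos x ^ (2 * n)) 0 (PI / 2).
Definition wallis_J (n : nat) : R := RInt (fun x => x ^ 2 * cos x ^ (2 * n)) 0 (PI / 2).

Lemma ex_RInt_cos_pow k : ex_RInt (fun x => cos x ^ k) 0 (PI / 2).
Proof.
  apply ex_RInt_of_continuous; [pose proof PI2_RGT_0; lra|].
  intros x _. apply continuous_of_ex_derive. auto_derive. auto.
Qed.

Lemma ex_RInt_sq_cos_pow k : ex_RInt (fun x => x ^ 2 * cos x ^ k) 0 (PI / 2).
Proof.
  apply ex_RInt_of_continuous; [pose proof PI2_RGT_0; lra|].
  intros x _. apply continuous_of_ex_derive. auto_derive. auto.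
Qed.

Lemma RInt_0_PI2_of_is_derive (F f : R -> R) :
  (forall x, is_derive F x (f x)) -> (forall x, continuous f x) ->
  F (PI / 2) = F 0 -> RInt f 0 (PI / 2) = 0.
Proof.
  intros HF Hf HF0. rewrite (RInt_of_is_derive F f); auto.
  - lra.
  - pose proof PI2_RGT_0; lra.
Qed.

Lemma wallis_I_succ m :
  (2 * INR m + 2) * wallis_I (S m) = (2 * INR m + 1) * wallis_I m.
Proof.
  assert (H : RInt (fun x => (INR (2 * m) + 2) * cos x ^ S (S (2 * m))
                             + - (INR (2 * m) + 1) * cos x ^ (2 * m)) 0 (PI / 2) = 0).
  { apply (RInt_0_PI2_of_is_derive (fun x => sin x * cos x ^ S (2 * m))).
    - intros x.
      match goal with |- is_derive _ _ ?l =>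
        replace l with ((INR (2 * m) + 2) * cos x ^ S (S (2 * m))
                        - (INR (2 * m) + 1) * cos x ^ (2 * m)) by (as_R_eq; ring) end.
      apply is_derive_sin_cos_pow.
    - intros x. apply continuous_of_ex_derive. auto_derive. auto.
    - rewrite cos_PI2, sin_0, !pow_i by lia. ring. }
  rewrite RInt_lincomb in H by apply ex_RInt_cos_pow.
  unfold wallis_I. replace (2 * S m)%nat with (S (S (2 * m))) by lia.
  rewrite mult_INR in H. simpl (INR 2) in H. lra.
Qed.

Lemma wallis_J_succ m :
  wallis_I (S m) + 2 * (INR m + 1) ^ 2 * wallis_J (S m)
  = (INR m + 1) * (2 * INR m + 1) * wallis_J m.
Proof.
  set (c1 := 2 * (INR m + 1) ^ 2). set (c2 := (INR m + 1) * (2 * INR m + 1)).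
  assert (Hk : INR (2 * m) = 2 * INR m) by (rewrite mult_INR; reflexivity).
  assert (H : RInt (fun x => 1 * (1 * cos x ^ S (S (2 * m))
                                  + c1 * (x ^ 2 * cos x ^ S (S (2 * m))))
                             + - c2 * (x ^ 2 * cos x ^ (2 * m))) 0 (PI / 2) = 0).
  { apply (RInt_0_PI2_of_is_derive (fun x => x * cos x ^ S (S (2 * m))
             + (INR (2 * m) + 2) / 2 * x ^ 2 * sin x * cos x ^ S (2 * m))).
    - intros x.
      match goal with |- is_derive _ _ ?l =>
        replace l with (cos x ^ S (S (2 * m))
          + (INR (2 * m) + 2) ^ 2 / 2 * (x ^ 2 * cos x ^ S (S (2 * m)))
          - (INR (2 * m) + 2) * (INR (2 * m) + 1) / 2 * (x ^ 2 * cos x ^ (2 * m)))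
          by (unfold c1, c2; rewrite Hk; as_R_eq; field) end.
      apply is_derive_wallis_J.
    - intros x. apply continuous_of_ex_derive. auto_derive. auto.
    - rewrite cos_PI2, sin_0, !pow_i by lia. ring. }
  rewrite RInt_lincomb, (RInt_lincomb (fun x => cos x ^ S (S (2 * m)))) in H;
    auto using ex_RInt_lincomb, ex_RInt_cos_pow, ex_RInt_sq_cos_pow.
  unfold wallis_I, wallis_J. replace (2 * S m)%nat with (S (S (2 * m))) by lia.
  fold c1 c2. lra.
Qed.

Lemma wallis_I_0 : wallis_I 0 = PI / 2.
Proof.
  unfold wallis_I. rewrite (RInt_of_is_derive (fun x => x) (fun _ => 1)).
  - lra.
  - pose proof PI2_RGT_0; lra.
  - intros; auto_derive; auto.
  - intros; apply continuous_const.
Qed.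

Lemma wallis_J_0 : wallis_J 0 = (PI / 2) ^ 3 / 3.
Proof.
  unfold wallis_J. rewrite (RInt_of_is_derive (fun x => x ^ 3 / 3) (fun x => x ^ 2 * 1)).
  - as_R_eq. field.
  - pose proof PI2_RGT_0; lra.
  - intros; auto_derive; auto. as_R_eq. field.
  - intros; apply continuous_of_ex_derive; auto_derive; auto.
Qed.

Lemma wallis_I_pos n : 0 < wallis_I n.
Proof.
  induction n as [|n IH].
  - rewrite wallis_I_0. apply PI2_RGT_0.
  - pose proof (wallis_I_succ n). pose proof (pos_INR n). nra.
Qed.

Lemma mul_cos_le_sin x : 0 <= x <= PI / 2 -> x * cos x <= sin x.
Proof.
  intros Hx.
  assert (H := le_of_is_derive_ge0 (fun t => sin t - t * cos t) (fun t => t * sin t) 0 x).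
  cbv beta in H. rewrite sin_0, Rmult_0_l in H. cut (0 - 0 <= sin x - x * cos x); [lra|].
  apply H; [lra | | |].
  - intros t _. auto_derive; auto. ring.
  - intros t _. apply continuous_of_ex_derive. auto_derive. auto.
  - intros t Ht. apply Rmult_le_pos; [lra|].
    apply sin_ge_0; pose proof PI2_Rlt_PI; lra.
Qed.

Lemma wallis_J_succ_le m : wallis_J (S m) <= wallis_I m - wallis_I (S m).
Proof.
  unfold wallis_J, wallis_I.
  replace (RInt _ 0 _ - RInt _ 0 _)
    with (RInt (fun x => 1 * cos x ^ (2 * m) + (-1) * cos x ^ (2 * S m)) 0 (PI / 2))
    by (rewrite RInt_lincomb by apply ex_RInt_cos_pow; as_R_eq; ring).
  apply RInt_le.
  - pose proof PI2_RGT_0; lra.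
  - apply ex_RInt_sq_cos_pow.
  - apply ex_RInt_lincomb; apply ex_RInt_cos_pow.
  - intros x Hx. replace (2 * S m)%nat with (S (S (2 * m))) by lia.
    assert (Hc : 0 <= cos x) by (apply cos_ge_0; lra).
    assert (Hxc := mul_cos_le_sin x ltac:(lra)).
    assert (Hk : 0 <= cos x ^ (2 * m)) by (apply pow_le; auto).
    replace (x ^ 2 * cos x ^ S (S (2 * m))) with ((x * cos x) ^ 2 * cos x ^ (2 * m))
      by (simpl; ring).
    replace (1 * cos x ^ (2 * m) + -1 * cos x ^ S (S (2 * m)))
      with (sin x ^ 2 * cos x ^ (2 * m)) by (rewrite sin_sq; simpl; ring).
    apply Rmult_le_compat_r; auto. apply pow_incr. split; [|lra].
    apply Rmult_le_pos; lra.
Qed.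

Fixpoint sum_inv_sq (n : nat) : R :=
  match n with O => 0 | S k => sum_inv_sq k + / INR (S k) ^ 2 end.

(* Matsuoka's proof of Euler's formula: 1/n^2 = 2 J(n-1)/I(n-1) - 2 J(n)/I(n),
   so the partial sums telescope. *)
Lemma sum_inv_sq_wallis n : sum_inv_sq n = PI ^ 2 / 6 - 2 * wallis_J n / wallis_I n.
Proof.
  induction n as [|n IH].
  - simpl. rewrite wallis_I_0, wallis_J_0. field. pose proof PI_RGT_0; lra.
  - cbn [sum_inv_sq]. rewrite IH, S_INR.
    pose proof (wallis_I_succ n) as HI. pose proof (wallis_J_succ n) as HJ.
    pose proof (wallis_I_pos n). pose proof (wallis_I_pos (S n)). pose proof (pos_INR n).
    assert (EI : wallis_I n = (2 * INR n + 2) * wallis_I (S n) / (2 * INR n + 1))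
      by (rewrite HI; field; lra).
    assert (EJ : wallis_J n = (wallis_I (S n) + 2 * (INR n + 1) ^ 2 * wallis_J (S n))
                              / ((INR n + 1) * (2 * INR n + 1)))
      by (rewrite HJ; field; lra).
    rewrite EI, EJ. field. lra.
Qed.

Lemma sum_inv_sq_ge m : PI ^ 2 / 6 - 2 / INR (S m) <= sum_inv_sq (S m).
Proof.
  rewrite sum_inv_sq_wallis, S_INR.
  pose proof (wallis_J_succ_le m). pose proof (wallis_I_succ m).
  pose proof (wallis_I_pos (S m)). pose proof (pos_INR m).
  assert (wallis_J (S m) * (2 * INR m + 1) <= wallis_I (S m)) by nra.
  apply Rplus_le_compat_l, Ropp_le_contravar.
  apply Rmult_le_reg_r with ((INR m + 1) * wallis_I (S m)); [nra|].
  field_simplify; [nra | lra | lra].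
Qed.

Fixpoint log_series (N : nat) (y : R) : R :=
  match N with O => 0 | S n => log_series n y + y ^ S n / INR (S n) end.

Fixpoint geom_series (N : nat) (y : R) : R :=
  match N with O => 0 | S n => geom_series n y + y ^ n end.

Lemma is_derive_log_series N y : is_derive (log_series N) y (geom_series N y).
Proof.
  induction N as [|N IH]; simpl.
  - apply (is_derive_const 0).
  - apply (is_derive_plus (log_series N) (fun y => y ^ S N / INR (S N))); auto.
    auto_derive; [exact I|]. fold_INR_S. as_R_eq. field. apply not_0_INR; lia.
Qed.

Lemma geom_series_mul N y : geom_series N y * (1 - y) = 1 - y ^ N.
Proof. induction N as [|N IH]; simpl; [ring|]. rewrite Rmult_plus_distr_r, IH. ring. Qed.

(* The remainder of the series of -ln(1-y) has derivative y^N/(1-y) >= 0. *)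
Lemma log_series_remainder_le N y1 y2 : 0 <= y1 <= y2 -> y2 < 1 ->
  - ln (1 - y1) - log_series N y1 <= - ln (1 - y2) - log_series N y2.
Proof.
  intros H12 H2.
  apply (le_of_is_derive_ge0 (fun y => - ln (1 - y) - log_series N y)
           (fun y => y ^ N / (1 - y))); [lra | | |].
  - intros y Hy.
    replace (y ^ N / (1 - y)) with (1 / (1 - y) - geom_series N y)
      by (replace (y ^ N) with (1 - geom_series N y * (1 - y))
            by (rewrite geom_series_mul; ring); field; lra).
    apply (is_derive_minus (fun y => - ln (1 - y))); [|apply is_derive_log_series].
    auto_derive; [lra|]. as_R_eq. field. lra.
  - intros y Hy. apply continuous_of_ex_derive. auto_derive. lra.
  - intros y Hy. apply Rdiv_le_0_compat; [apply pow_le|]; lra.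
Qed.

Definition theta (v : R) : R := ln (1 + v + v ^ 2) - ln (1 + v).

Lemma theta_eq_ln v : 0 <= v -> theta v = ln (1 + v ^ 2 / (1 + v)).
Proof. intros. unfold theta. rewrite <- ln_div by nra. f_equal. field. lra. Qed.

Lemma theta_pos v : 0 < v -> 0 < theta v.
Proof.
  intros. unfold theta.
  assert (ln (1 + v) < ln (1 + v + v ^ 2)) by (apply ln_increasing; nra). lra.
Qed.

Lemma ln_le_sub_1 x : 0 < x -> ln x <= x - 1.
Proof.
  intros. rewrite <- (ln_exp (x - 1)). apply ln_le; [lra|].
  pose proof (exp_ineq1_le (x - 1)). lra.
Qed.

Lemma ln_ge_1_sub_inv x : 0 < x -> 1 - / x <= ln x.
Proof.
  intros Hx. assert (Hix : 0 < / x) by (apply Rinv_0_lt_compat; lra).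
  pose proof (ln_le_sub_1 (/ x) Hix) as Hle. rewrite ln_Rinv in Hle by lra. lra.
Qed.

Lemma theta_le_sq v : 0 < v -> theta v <= v ^ 2.
Proof.
  intros. rewrite theta_eq_ln by lra.
  assert (0 <= v ^ 2 / (1 + v)) by (apply Rdiv_le_0_compat; nra).
  eapply Rle_trans; [apply ln_le_sub_1; lra|].
  assert (v ^ 2 / (1 + v) <= v ^ 2); [|lra].
  apply Rmult_le_reg_r with (1 + v); [lra|]. field_simplify; nra.
Qed.

Lemma theta_ge_sq v : 0 < v <= 1 -> v ^ 2 / 3 <= theta v.
Proof.
  intros. rewrite theta_eq_ln by lra.
  assert (0 <= v ^ 2 / (1 + v)) by (apply Rdiv_le_0_compat; nra).
  eapply Rle_trans; [| apply ln_ge_1_sub_inv; lra].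
  replace (1 - / (1 + v ^ 2 / (1 + v))) with (v ^ 2 / (1 + v + v ^ 2)) by (field; nra).
  apply Rmult_le_compat_l; [nra|]. apply Rinv_le_contravar; nra.
Qed.

Lemma theta_inv u : 0 < u -> theta u = ln u + theta (/ u).
Proof.
  intros. unfold theta.
  replace (1 + u + u ^ 2) with ((u * u) * (1 + / u + (/ u) ^ 2)) by (field; lra).
  replace (1 + u) with (u * (1 + / u)) by (field; lra).
  assert (0 < / u) by (apply Rinv_0_lt_compat; lra).
  rewrite !ln_mult by nra. ring.
Qed.

Lemma theta_le_ln_add_1 b : 1 <= b -> theta b <= ln b + 1.
Proof.
  intros. rewrite theta_inv by lra.
  assert (0 < / b <= 1)
    by (split; [apply Rinv_0_lt_compat | rewrite <- Rinv_1; apply Rinv_le_contravar]; lra).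
  pose proof (theta_le_sq (/ b) ltac:(lra)). nra.
Qed.

Definition theta_trunc (N : nat) (v : R) : R := log_series N (v ^ 2) - log_series N (v ^ 3).

(* theta v = (- ln (1 - v^3)) - (- ln (1 - v^2)), and the log-series remainder is monotone. *)
Lemma theta_trunc_le N v : 0 <= v <= 1 -> theta_trunc N v <= theta v.
Proof.
  intros Hv. unfold theta_trunc. destruct (Req_dec v 1) as [->|Hv1].
  - unfold theta. rewrite !pow1.
    assert (ln 2 < ln 3) by (apply ln_increasing; lra).
    replace (1 + 1 + 1) with 3 by ring. replace (1 + 1) with 2 by ring. lra.
  - assert (v ^ 3 <= v ^ 2) by (simpl; nra).
    assert (0 <= v ^ 3) by (apply pow_le; lra).
    assert (v ^ 2 < 1) by (simpl; nra).
    pose proof (log_series_remainder_le N (v ^ 3) (v ^ 2) ltac:(lra) ltac:(lra)).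
    assert (ln (1 - v ^ 3) = ln (1 - v) + ln (1 + v + v ^ 2))
      by (rewrite <- ln_mult by nra; f_equal; ring).
    assert (ln (1 - v ^ 2) = ln (1 - v) + ln (1 + v))
      by (rewrite <- ln_mult by nra; f_equal; ring).
    unfold theta. lra.
Qed.

Fixpoint theta_prim (N : nat) (v : R) : R :=
  match N with
  | O => 0
  | S n => theta_prim n v + / (2 * INR (S n) ^ 2) * v ^ (2 * S n)
                          - / (3 * INR (S n) ^ 2) * v ^ (3 * S n)
  end.

Lemma is_derive_scal_pow c k v : v <> 0 ->
  is_derive (fun v => c * v ^ k) v (c * (INR k * v ^ k / v)).
Proof.
  intros Hv. destruct k as [|k].
  - simpl. replace (c * (0 * 1 / v)) with 0 by (field; auto). apply (is_derive_const (c * 1)).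
  - auto_derive; [exact I|]. fold_INR_S. simpl. as_R_eq. field. auto.
Qed.

Lemma is_derive_add_sub (f h k : R -> R) x df dh dk :
  is_derive f x df -> is_derive h x dh -> is_derive k x dk ->
  is_derive (fun x => f x + h x - k x) x (df + dh - dk).
Proof. intros Hf Hh Hk. exact (is_derive_minus _ _ _ _ _ (is_derive_plus _ _ _ _ _ Hf Hh) Hk). Qed.

Lemma is_derive_theta_prim N v : 0 < v ->
  is_derive (theta_prim N) v (theta_trunc N v / v).
Proof.
  intros Hv. unfold theta_trunc. induction N as [|N IH]; cbn [theta_prim log_series].
  - replace ((0 - 0) / v) with 0 by (field; lra). apply (is_derive_const 0).
  - assert (HN : INR (S N) <> 0) by (apply not_0_INR; lia).
    replace ((log_series N (v ^ 2) + (v ^ 2) ^ S N / INR (S N)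
              - (log_series N (v ^ 3) + (v ^ 3) ^ S N / INR (S N))) / v)
      with ((log_series N (v ^ 2) - log_series N (v ^ 3)) / v
            + / (2 * INR (S N) ^ 2) * (INR (2 * S N) * v ^ (2 * S N) / v)
            - / (3 * INR (S N) ^ 2) * (INR (3 * S N) * v ^ (3 * S N) / v))
      by (rewrite <- !pow_mult, !(mult_INR _ (S N)); simpl (INR 2); simpl (INR 3);
          field; lra).
    apply is_derive_add_sub; [exact IH | |]; apply is_derive_scal_pow; lra.
Qed.

Lemma pow_succ_le_self e n : 0 <= e <= 1 -> e ^ S n <= e.
Proof.
  intros He. induction n as [|n IH]; [simpl; lra|].
  change (e ^ S (S n)) with (e * e ^ S n).
  assert (0 <= e ^ S n) by (apply pow_le; lra). nra.
Qed.

Lemma theta_prim_diff_ge N e : 0 < e <= 1 ->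
  sum_inv_sq N * (1 / 6 - e ^ 2 / 2) <= theta_prim N 1 - theta_prim N e.
Proof.
  intros He. induction N as [|N IH]; cbn [sum_inv_sq theta_prim]; [lra|].
  rewrite !pow1.
  assert (HN : 0 < INR (S N)) by (apply lt_0_INR; lia).
  assert (E2 : e ^ (2 * S N) <= e ^ 2).
  { rewrite pow_mult. apply pow_succ_le_self. split; [apply pow_le|]; simpl; nra. }
  assert (E3 : 0 <= e ^ (3 * S N)) by (apply pow_le; lra).
  assert (Hterm : / INR (S N) ^ 2 * (1 / 6 - e ^ 2 / 2)
                  <= / (2 * INR (S N) ^ 2) * (1 - e ^ (2 * S N))
                     - / (3 * INR (S N) ^ 2) * (1 - e ^ (3 * S N))).
  { set (w := / INR (S N) ^ 2).
    assert (Hw : 0 < w) by (apply Rinv_0_lt_compat; nra).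
    replace (/ (2 * INR (S N) ^ 2)) with (w / 2) by (unfold w; field; lra).
    replace (/ (3 * INR (S N) ^ 2)) with (w / 3) by (unfold w; field; lra).
    nra. }
  lra.
Qed.

Lemma continuous_theta_div v : 0 < v -> continuous (fun v => theta v / v) v.
Proof.
  intros Hv. apply continuous_of_ex_derive. unfold theta. auto_derive. repeat split; nra.
Qed.

Lemma continuous_theta_trunc_div N v : 0 < v -> continuous (fun v => theta_trunc N v / v) v.
Proof.
  intros Hv. apply continuous_of_ex_derive. unfold theta_trunc.
  auto_derive. repeat split; try lra; eexists; apply is_derive_log_series.
Qed.

Definition theta_int (e : R) : R := RInt (fun v => theta v / v) e 1.

Lemma theta_int_ge_trunc N e : 0 < e <= 1 ->
  sum_inv_sq N * (1 / 6 - e ^ 2 / 2) <= theta_int e.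
Proof.
  intros He. unfold theta_int. eapply Rle_trans; [apply (theta_prim_diff_ge N e He)|].
  rewrite <- (RInt_of_is_derive (theta_prim N) (fun v => theta_trunc N v / v)).
  - apply RInt_le; [lra | | |].
    + apply ex_RInt_of_continuous; [lra|]. intros; apply continuous_theta_trunc_div; lra.
    + apply ex_RInt_of_continuous; [lra|]. intros; apply continuous_theta_div; lra.
    + intros v Hv. apply Rmult_le_compat_r; [left; apply Rinv_0_lt_compat; lra|].
      apply theta_trunc_le; lra.
  - lra.
  - intros; apply is_derive_theta_prim; lra.
  - intros; apply continuous_theta_trunc_div; lra.
Qed.

Lemma le_of_forall_le_sub_div (x y c : R) : 0 <= c ->
  (forall n : nat, y - c / INR (S n) <= x) -> y <= x.
Proof.
  intros Hc H. apply Rle_plus_epsilon. intros eps Heps.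
  destruct (archimed_cor1 (eps / (c + 1))) as [N [HN HN0]]; [apply Rdiv_lt_0_compat; lra|].
  specialize (H (pred N)). rewrite Nat.succ_pred_pos in H by lia.
  assert (HN1 : 0 < INR N) by (apply lt_0_INR; lia).
  assert (c / INR N < eps); [|lra].
  apply Rle_lt_trans with ((c + 1) * / INR N).
  - apply Rmult_le_compat_r; [left; apply Rinv_0_lt_compat|]; lra.
  - replace eps with ((c + 1) * (eps / (c + 1))) by (field; lra).
    apply Rmult_lt_compat_l; lra.
Qed.

(* Let N -> oo in [theta_int_ge_trunc]: the constant is zeta(2) / 6 = pi^2 / 36. *)
Lemma theta_int_ge e : 0 < e <= 1 -> e ^ 2 <= 1 / 3 ->
  PI ^ 2 / 36 - 2 * e ^ 2 <= theta_int e.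
Proof.
  intros He He2. set (c := 1 / 6 - e ^ 2 / 2).
  assert (Hc : 0 <= c) by (unfold c; lra).
  assert (PI ^ 2 / 6 * c <= theta_int e).
  { apply (le_of_forall_le_sub_div _ _ (2 * c)); [lra|]. intros m.
    eapply Rle_trans; [|apply (theta_int_ge_trunc (S m) e He)].
    pose proof (sum_inv_sq_ge m).
    replace (PI ^ 2 / 6 * c - 2 * c / INR (S m)) with ((PI ^ 2 / 6 - 2 / INR (S m)) * c)
      by (field; apply not_0_INR; lia).
    apply Rmult_le_compat_r; auto. }
  assert (PI ^ 2 <= 16) by (pose proof PI_4; pose proof PI_RGT_0; nra).
  assert (PI ^ 2 * e ^ 2 <= 16 * e ^ 2) by (apply Rmult_le_compat_r; [apply pow2_ge_0 | lra]).
  unfold c in *. nra.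
Qed.

Lemma exp_neg_bounds z : 0 < z -> 0 < exp (- z) < 1.
Proof. intros. split; [apply exp_pos|]. rewrite <- exp_0. apply exp_increasing. lra. Qed.

Lemma beta_bounds u : 0 < u < 1 -> 0 < beta u <= 1.
Proof.
  intros Hu. unfold beta. pose proof (sqrt_pos (u * (4 - 3 * u))).
  assert (sqrt (u * (4 - 3 * u)) <= 2 - u); [|lra].
  rewrite <- (sqrt_pow2 (2 - u)) by lra. apply sqrt_le_1_alt. nra.
Qed.

Lemma continuous_g z : 0 < z -> continuous g z.
Proof.
  intros Hz. apply continuous_of_ex_derive. pose proof (exp_neg_bounds z Hz).
  pose proof (beta_bounds (1 - exp (- z)) ltac:(lra)). unfold g, beta, Rminus, Rdiv in *.
  auto_derive. repeat split; [apply Rmult_lt_0_compat | ]; lra.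
Qed.

Lemma g_ge0 z : 0 < z -> 0 <= g z.
Proof.
  intros Hz. pose proof (exp_neg_bounds z Hz).
  destruct (beta_bounds (1 - exp (- z)) ltac:(lra)) as [Hb0 Hb1]. unfold g.
  pose proof (ln_le _ 1 Hb0 Hb1) as Hln. rewrite ln_1 in Hln. lra.
Qed.

(* Along z = theta u one has 1 - e^(-z) = u^2 / (1 + u + u^2), which makes
   the radicand of beta the perfect square (u (2 + u) / (1 + u + u^2))^2. *)
Lemma g_theta u : 0 < u -> g (theta u) = theta u - ln u.
Proof.
  intros Hu. unfold g, theta. set (D := 1 + u + u ^ 2).
  assert (HD : 0 < D) by (unfold D; nra).
  replace (exp (- (ln D - ln (1 + u)))) with ((1 + u) / D)
    by (rewrite <- exp_ln with ((1 + u) / D) by (apply Rdiv_lt_0_compat; lra);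
        f_equal; rewrite ln_div by lra; ring).
  replace (beta (1 - (1 + u) / D)) with (u * (1 + u) / D).
  - rewrite ln_div, ln_mult by nra. ring.
  - unfold beta.
    replace ((1 - (1 + u) / D) * (4 - 3 * (1 - (1 + u) / D))) with ((u * (2 + u) / D) ^ 2)
      by (unfold D; field; nra).
    rewrite sqrt_pow2 by (apply Rdiv_le_0_compat; nra). unfold D. field. nra.
Qed.

Definition theta_deriv (u : R) : R := (1 + 2 * u) / (1 + u + u ^ 2) - 1 / (1 + u).

Lemma is_derive_theta u : 0 < u -> is_derive theta u (theta_deriv u).
Proof.
  intros. unfold theta, theta_deriv. auto_derive; [repeat split; nra|]. as_R_eq. field. nra.
Qed.

Lemma continuous_theta_deriv u : 0 < u -> continuous theta_deriv u.
Proof.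
  intros. apply continuous_of_ex_derive. unfold theta_deriv. auto_derive. repeat split; nra.
Qed.

Lemma RInt_comp_inv (f : R -> R) a b : 0 < a <= b ->
  (forall v, / b <= v <= / a -> continuous f v) ->
  RInt (fun u => f (/ u) / u ^ 2) a b = RInt f (/ b) (/ a).
Proof.
  intros Hab Hf.
  assert (Hinv : forall u, a <= u <= b -> / b <= / u <= / a)
    by (intros; split; apply Rinv_le_contravar; lra).
  assert (Hba : / b <= / a) by (apply Rinv_le_contravar; lra).
  rewrite <- (opp_RInt_swap f) by (apply ex_RInt_swap, ex_RInt_of_continuous; auto).
  rewrite <- (RInt_comp f Rinv (fun u => - / u ^ 2) a b).
  - rewrite <- RInt_opp.
    + apply RInt_ext. intros x Hx. rewrite Rmin_left, Rmax_right in Hx by lra.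
      unfold scal, opp; simpl; unfold mult; simpl. as_R_eq. field. lra.
    + apply ex_RInt_of_continuous; [lra|]. intros x Hx.
      unfold scal; simpl; unfold mult; simpl.
      apply (continuous_mult (fun u => - / u ^ 2) (fun u => f (/ u))).
      * apply continuous_of_ex_derive. auto_derive. nra.
      * apply continuous_comp; [apply continuous_of_ex_derive; auto_derive; lra|].
        apply Hf, Hinv; lra.
  - intros x Hx. rewrite Rmin_left, Rmax_right in Hx by lra. apply Hf, Hinv; lra.
  - intros x Hx. rewrite Rmin_left, Rmax_right in Hx by lra. split.
    + auto_derive; [lra|]. as_R_eq. field. lra.
    + apply continuous_of_ex_derive. auto_derive. nra.
Qed.

Lemma RInt_theta_div_from_1 b : 1 <= b ->
  RInt (fun v => theta v / v) 1 b = ln b ^ 2 / 2 + theta_int (/ b).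
Proof.
  intros Hb. unfold theta_int.
  assert (Hsub := RInt_comp_inv (fun v => theta v / v) 1 b ltac:(lra)).
  rewrite Rinv_1 in Hsub. cbv beta in Hsub. rewrite <- Hsub.
  2: { intros v Hv. apply continuous_theta_div.
       pose proof (Rinv_0_lt_compat b ltac:(lra)). lra. }
  rewrite (RInt_ext _ (fun u => 1 * (ln u / u) + 1 * (theta (/ u) / / u / u ^ 2))).
  2: { intros u Hu. rewrite Rmin_left, Rmax_right in Hu by lra.
       rewrite (theta_inv u) by lra. as_R_eq. field. lra. }
  rewrite RInt_lincomb.
  - rewrite (RInt_of_is_derive (fun u => ln u ^ 2 / 2) (fun u => ln u / u));
      [rewrite ln_1; as_R_eq; lra | lra | |].
    + intros u Hu. auto_derive; [lra|]. as_R_eq. field. lra.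
    + intros u Hu. apply continuous_of_ex_derive. auto_derive. lra.
  - apply ex_RInt_of_continuous; [lra|]. intros u Hu.
    apply continuous_of_ex_derive. auto_derive. lra.
  - apply ex_RInt_of_continuous; [lra|]. intros u Hu.
    assert (0 < / u) by (apply Rinv_0_lt_compat; lra).
    apply continuous_of_ex_derive. unfold theta. auto_derive. repeat split; nra.
Qed.

Lemma RInt_g_theta a b : 0 < a <= 1 -> 1 <= b ->
  RInt g (theta a) (theta b)
  = (theta b - ln b) ^ 2 / 2 - (theta a ^ 2 / 2 - theta a * ln a)
    + theta_int a + theta_int (/ b).
Proof.
  intros Ha Hb.
  rewrite <- (RInt_comp g theta theta_deriv a b).
  2: { intros x Hx. rewrite Rmin_left, Rmax_right in Hx by lra.
       apply continuous_g, theta_pos; lra. }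
  2: { intros x Hx. rewrite Rmin_left, Rmax_right in Hx by lra.
       split; [apply is_derive_theta | apply continuous_theta_deriv]; lra. }
  rewrite (RInt_ext _ (fun u => 1 * (theta_deriv u * (theta u - ln u) - theta u / u)
                                + 1 * (theta u / u))).
  2: { intros u Hu. rewrite Rmin_left, Rmax_right in Hu by lra.
       rewrite g_theta by lra. unfold scal; simpl; unfold mult; simpl. as_R_eq. field. lra. }
  assert (Hpos : forall u, a <= u <= b -> 0 < u) by (intros; lra).
  rewrite RInt_lincomb.
  - rewrite (RInt_of_is_derive (fun u => theta u ^ 2 / 2 - theta u * ln u)); [| lra | |].
    + rewrite <- (RInt_Chasles _ a 1 b) by
        (apply ex_RInt_of_continuous; [lra | intros; apply continuous_theta_div; lra]).
      rewrite RInt_theta_div_from_1 by lra. unfold theta_int, plus; simpl. as_R_eq. lra.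
    + intros u Hu. specialize (Hpos u Hu). unfold theta, theta_deriv.
      auto_derive; [repeat split; nra|]. replace (u * (u * 1)) with (u ^ 2) by ring.
      as_R_eq. field. split; nra.
    + intros u Hu. specialize (Hpos u Hu). apply continuous_of_ex_derive.
      unfold theta, theta_deriv. auto_derive. repeat split; nra.
  - apply ex_RInt_of_continuous; [lra|]. intros u Hu. specialize (Hpos u Hu).
    apply continuous_of_ex_derive. unfold theta, theta_deriv. auto_derive. repeat split; nra.
  - apply ex_RInt_of_continuous; [lra|]. intros; apply continuous_theta_div; lra.
Qed.

Lemma RInt_g_theta_ge a b : 0 < a <= 1 -> a ^ 2 <= 1 / 3 -> 1 <= b -> (/ b) ^ 2 <= 1 / 3 ->
  PI ^ 2 / 18 - 2 * a ^ 2 - 2 * (/ b) ^ 2 - a ^ 4 / 2 + a ^ 2 * ln a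
  <= RInt g (theta a) (theta b).
Proof.
  intros Ha Ha2 Hb Hb2. rewrite RInt_g_theta by lra.
  assert (Hib : 0 < / b <= 1)
    by (split; [apply Rinv_0_lt_compat | rewrite <- Rinv_1; apply Rinv_le_contravar]; lra).
  pose proof (theta_int_ge a Ha Ha2). pose proof (theta_int_ge (/ b) Hib Hb2).
  pose proof (pow2_ge_0 (theta b - ln b)).
  pose proof (theta_pos a ltac:(lra)). pose proof (theta_le_sq a ltac:(lra)).
  assert (ln a <= 0) by (rewrite <- ln_1; apply ln_le; lra).
  assert (theta a ^ 2 <= a ^ 4)
    by (replace (a ^ 4) with ((a ^ 2) ^ 2) by ring; apply pow_incr; lra).
  assert (a ^ 2 * ln a <= theta a * ln a) by nra.
  lra.
Qed.

Lemma ln_sqrt x : 0 < x -> ln (sqrt x) = ln x / 2.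
Proof.
  intros Hx. pose proof (sqrt_lt_R0 x Hx).
  rewrite <- (sqrt_sqrt x) at 2 by lra. rewrite ln_mult by lra. field.
Qed.

(* Take a = sqrt (3 z1) and b = e^(z2 - 1): then [theta a, theta b] lies in [z1, z2]. *)
Lemma RInt_g_ge z1 z2 : 0 < z1 <= 1 / 9 -> 2 <= z2 ->
  PI ^ 2 / 18 - 7 * z1 + 3 / 2 * z1 * ln (3 * z1) - 2 * exp (2 - 2 * z2) <= RInt g z1 z2.
Proof.
  intros Hz1 Hz2.
  set (a := sqrt (3 * z1)). set (b := exp (z2 - 1)).
  assert (Ha2 : a ^ 2 = 3 * z1) by (apply pow2_sqrt; lra).
  assert (Ha0 : 0 < a) by (apply sqrt_lt_R0; lra).
  assert (Hb : z2 <= b) by (pose proof (exp_ineq1_le (z2 - 1)); unfold b; lra).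
  assert (Hib : 0 < / b <= / 2)
    by (split; [apply Rinv_0_lt_compat | apply Rinv_le_contravar]; lra).
  assert (Hb2 : (/ b) ^ 2 = exp (2 - 2 * z2)).
  { unfold b. rewrite <- exp_Ropp. simpl. rewrite Rmult_1_r, <- exp_plus. f_equal. ring. }
  assert (Hlnb : ln b = z2 - 1) by apply ln_exp.
  assert (Hlna : ln a = ln (3 * z1) / 2) by (apply ln_sqrt; lra).
  assert (Hta : z1 <= theta a <= 3 * z1)
    by (pose proof (theta_ge_sq a); pose proof (theta_le_sq a); nra).
  assert (Htb : z2 - 1 <= theta b <= z2).
  { pose proof (theta_le_ln_add_1 b ltac:(lra)). pose proof (theta_inv b ltac:(lra)).
    pose proof (theta_pos (/ b) ltac:(lra)). lra. }
  eapply Rle_trans; [| apply RInt_le_subinterval with (s := theta a) (t := theta b)].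
  - eapply Rle_trans; [| apply RInt_g_theta_ge; nra].
    replace (a ^ 4) with ((a ^ 2) ^ 2) by ring. rewrite Ha2, Hb2, Hlna. nra.
  - lra.
  - lra.
  - lra.
  - intros x Hx. split; [apply continuous_g | apply g_ge0]; lra.
Qed.

Lemma exp_INR_le_pow3 n : exp (INR n) <= 3 ^ n.
Proof.
  induction n as [|n IH]; [simpl; rewrite exp_0; lra|].
  rewrite S_INR, exp_plus. simpl.
  pose proof exp_le_3. pose proof (exp_pos (INR n)). pose proof (exp_pos 1). nra.
Qed.

Lemma RInt_g_ge_small_q q z1 z2 : 0 < q <= 1 / 100 ->
  sqrt q <= z1 <= sqrt q + q -> ln (/ q) - q <= z2 <= ln (/ q) ->
  PI ^ 2 / 18 - 20 * sqrt q * ln (/ q) <= RInt g z1 z2.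
Proof.
  intros Hq Hz1 Hz2. set (s := sqrt q) in *. set (L := ln (/ q)) in *.
  assert (Hs0 : 0 < s) by (apply sqrt_lt_R0; lra).
  assert (Hss : s * s = q) by (apply sqrt_sqrt; lra).
  assert (Hs1 : s <= 1 / 10)
    by (unfold s; rewrite <- (sqrt_pow2 (1 / 10)) by lra; apply sqrt_le_1_alt; lra).
  assert (HL : 4 <= L).
  { unfold L. rewrite <- (ln_exp 4). apply ln_le; [apply exp_pos|].
    replace 4 with (INR 4) by (simpl; ring). pose proof (exp_INR_le_pow3 4).
    assert (100 <= / q)
      by (replace 100 with (/ (1 / 100)) by field; apply Rinv_le_contravar; lra).
    simpl in *. lra. }
  assert (Hlns : ln s = - L / 2)
    by (unfold s, L; rewrite ln_sqrt, ln_Rinv by lra; field).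
  assert (Hln3 : ln s <= ln (3 * z1)) by (apply ln_le; lra).
  assert (Hexp : exp (2 - 2 * z2) <= 27 * q ^ 2).
  { apply Rle_trans with (exp (INR 3) * (exp (- L) * exp (- L))).
    - rewrite <- !exp_plus. apply Rlt_le, exp_increasing. simpl. lra.
    - unfold L. rewrite ln_Rinv, Ropp_involutive, exp_ln by lra.
      pose proof (exp_INR_le_pow3 3). simpl in *. nra. }
  eapply Rle_trans; [| apply RInt_g_ge; lra].
  assert (Hz1ln : z1 * (- L / 2) <= z1 * ln (3 * z1))
    by (rewrite <- Hlns; apply Rmult_le_compat_l; lra).
  assert (z1 <= 11 / 10 * s) by nra.
  assert (z1 * L <= 11 / 10 * s * L) by (apply Rmult_le_compat_r; lra).
  assert (q ^ 2 <= s / 1000).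
  { rewrite <- Hss. replace ((s * s) ^ 2) with (s * (s * s * s)) by ring.
    apply Rmult_le_compat_l; [lra|]. assert (s * s <= 1 / 100) by nra. nra. }
  assert (4 * s <= s * L) by nra.
  lra.
Qed.

Lemma neg_ln_1_sub_bounds p : 0 < p < 0.1 -> 0 < - ln (1 - p) <= 1 / 9.
Proof.
  intros Hp. split.
  - assert (Hln : ln (1 - p) < ln 1) by (apply ln_increasing; lra). rewrite ln_1 in Hln. lra.
  - pose proof (ln_ge_1_sub_inv (1 - p) ltac:(lra)).
    assert (/ (1 - p) <= 10 / 9)
      by (replace (10 / 9) with (/ (9 / 10)) by field; apply Rinv_le_contravar; lra).
    lra.
Qed.

Lemma ceilZ_bounds x : x <= IZR (ceilZ x) < x + 1.
Proof. unfold ceilZ. destruct (base_Int_part (- x)). rewrite opp_IZR. lra. Qed.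

Lemma floorZ_bounds x : x - 1 < IZR (floorZ x) <= x.
Proof. unfold floorZ. destruct (base_Int_part x). lra. Qed.

Lemma RInt_g_ge0 z1 z2 : 0 < z1 <= z2 -> 0 <= RInt g z1 z2.
Proof.
  intros Hz. apply RInt_ge_0; [lra | |].
  - apply ex_RInt_of_continuous; [lra|]. intros; apply continuous_g; lra.
  - intros; apply g_ge0; lra.
Qed.

Lemma RInt_g_ge_large_q q z1 z2 : 1 / 100 < q <= 1 / 9 ->
  sqrt q <= z1 <= sqrt q + q -> ln (/ q) - q <= z2 <= ln (/ q) ->
  PI ^ 2 / 18 - 20 * sqrt q * ln (/ q) <= RInt g z1 z2.
Proof.
  intros Hq Hz1 Hz2. set (s := sqrt q) in *. set (L := ln (/ q)) in *.
  assert (Hs : 1 / 10 < s <= 1).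
  { unfold s. split.
    - rewrite <- (sqrt_pow2 (1 / 10)) by lra. apply sqrt_lt_1_alt. lra.
    - rewrite <- sqrt_1. apply sqrt_le_1_alt. lra. }
  assert (HL : 2 <= L).
  { unfold L. rewrite <- (ln_exp 2). apply ln_le; [apply exp_pos|].
    replace 2 with (INR 2) by (simpl; ring). pose proof (exp_INR_le_pow3 2).
    assert (9 <= / q) by (replace 9 with (/ (1 / 9)) by field; apply Rinv_le_contravar; lra).
    simpl in *. lra. }
  pose proof (RInt_g_ge0 z1 z2 ltac:(lra)).
  pose proof PI_4. pose proof PI_RGT_0. nra.
Qed.

Lemma ceilZ_inv_sqrt_mul_bounds q : 0 < q ->
  sqrt q <= IZR (ceilZ (1 / sqrt q)) * q <= sqrt q + q.
Proof.
  intros Hq. set (s := sqrt q).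
  assert (Hs0 : 0 < s) by (apply sqrt_lt_R0; lra).
  assert (Hss : s * s = q) by (apply sqrt_sqrt; lra).
  destruct (ceilZ_bounds (1 / s)). split.
  - replace s with (1 / s * q) at 1 by (rewrite <- Hss; field; lra).
    apply Rmult_le_compat_r; lra.
  - replace (s + q) with ((1 / s + 1) * q) by (rewrite <- Hss; field; lra).
    apply Rmult_le_compat_r; lra.
Qed.

Lemma floorZ_div_mul_bounds q x : 0 < q -> x - q <= IZR (floorZ (/ q * x)) * q <= x.
Proof.
  intros Hq. destruct (floorZ_bounds (/ q * x)). split.
  - replace (x - q) with ((/ q * x - 1) * q) by (field; lra).
    apply Rmult_le_compat_r; lra.
  - replace x with (/ q * x * q) at 2 by (field; lra).
    apply Rmult_le_compat_r; lra.
Qed.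

Theorem lemma9 :
  exists C1 : R,
    forall p : R, 0 < p < 0.1 ->
      let q := - ln (1 - p) in
      let A := IZR (ceilZ (1 / sqrt q)) in
      let B := IZR (floorZ (/ q * ln (/ q))) in
      RInt g (A * q) (B * q) >= PI ^ 2 / 18 - C1 * sqrt q * ln (/ q).
Proof.
  exists 20. intros p Hp q A B. apply Rle_ge.
  destruct (neg_ln_1_sub_bounds p Hp) as [Hq0 Hq1].
  pose proof (ceilZ_inv_sqrt_mul_bounds q Hq0) as HA.
  pose proof (floorZ_div_mul_bounds q (ln (/ q)) Hq0) as HB.
  destruct (Rle_or_lt q (1 / 100)).
  - apply RInt_g_ge_small_q; auto.
  - apply RInt_g_ge_large_q; auto.
Qed.
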